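(* The functor $X:\mathsf{ComRings}\to\mathsf{Ab}$, with the endomorphism $V$ and map $\langle\ \rangle$ described below, is a pre-Witt functor.
   Context: $\mathsf{ComRings}$ is the category of commutative rings with unity; $p$ is a fixed prime. For $R$ commutative, $R^{\mathbb N_0}$ carries the product topology; $V(r_0,r_1,\dots)=p(0,r_0,r_1,\dots)$, $\langle r\rangle=(r,r^p,r^{p^2},\dots)$, and $X(R)$ is the closed subgroup of $R^{\mathbb N_0}$ generated by $\{V^n\langle r\rangle\mid n\in\mathbb N_0, r\in R\}$, with $V$ and $\langle\ \rangle:R\to X(R)$ induced. A pre-Witt functor is a functor $F:\mathsf{ComRings}\to\mathsf{Ab}$ with functorial group endomorphisms $V:F(R)\to F(R)$ and functorial set maps $\langle\ \rangle:R\to F(R)$ such that: (1) $\langle 0\rangle=0$, and if $p\ne2$ then $\langle -x\rangle=-\langle x\rangle$; (2) $x\mapsto V\langle x^p\rangle-p\langle x\rangle$ is additive $R\to F(R)$; (3) $F(R)$ is complete with respect to the filtration $\{V^nF(R)\}_{n\ge0}$; (4) if $A$ is $p$-torsion free then $F(A)$ is $p$-torsion free. *)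

From mathcomp Require Import all_boot all_order all_algebra.
Set Implicit Arguments. Unset Strict Implicit. Unset Printing Implicit Defensive.
Import GRing.Theory.
Local Open Scope ring_scope.

(* Elements of R^{N_0} are sequences nat -> R; group law is componentwise. *)
Section X.
Variables (p : nat) (R : comPzRingType).

Definition Vop (s : nat -> R) : nat -> R :=
  fun n => if n is k.+1 then p%:R * s k else 0.

Definition teich (r : R) : nat -> R := fun n => r ^+ (p ^ n)%N.

Definition zero_seq : nat -> R := fun _ => 0.
Definition sub_seq (s t : nat -> R) : nat -> R := fun n => s n - t n.
Definition add_seq (s t : nat -> R) : nat -> R := fun n => s n + t n.
Definition scale_seq (m : nat) (s : nat -> R) : nat -> R := fun n => s n *+ m.

Definition Xgens (s : nat -> R) : Prop :=
  exists (n : nat) (r : R), s = iter n Vop (teich r).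

Definition is_subgroup (C : (nat -> R) -> Prop) : Prop :=
  C zero_seq /\ forall s t, C s -> C t -> C (sub_seq s t).

(* closed for the product topology on R^{N_0} (each factor R discrete):
   basic open neighbourhoods of s are the sets of sequences agreeing with s
   on the first N coordinates. *)
Definition prod_closed (C : (nat -> R) -> Prop) : Prop :=
  forall s, (forall N : nat, exists c, C c /\ forall i, (i < N)%N -> c i = s i) -> C s.

Definition Xset (s : nat -> R) : Prop :=
  forall C, is_subgroup C -> prod_closed C -> (forall g, Xgens g -> C g) -> C s.

Definition VnX (n : nat) (s : nat -> R) : Prop :=
  exists t, Xset t /\ s = iter n Vop t.

(* X(R) is complete w.r.t. the filtration V^n X(R): the canonical map
   X(R) -> lim_n X(R)/V^n X(R) is bijective. *)
Definition X_complete : Prop :=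
  (forall s, Xset s -> (forall n, VnX n s) -> s = zero_seq) /\
  (forall x : nat -> nat -> R,
      (forall n, Xset (x n)) ->
      (forall n, VnX n (sub_seq (x n.+1) (x n))) ->
      exists y, Xset y /\ forall n, VnX n (sub_seq y (x n))).

Definition p_torsion_free : Prop := forall a : R, a *+ p = 0 -> a = 0.

End X.

Definition Xmap (R S : comPzRingType) (f : {rmorphism R -> S}) (s : nat -> R)
  : nat -> S := fun n => f (s n).

Definition X_is_preWitt (p : nat) : Prop :=
  (forall R : comPzRingType, is_subgroup (@Xset p R)) /\
  (forall (R : comPzRingType) s, Xset p s -> Xset p (@Vop p R s)) /\
  (forall (R : comPzRingType) (r : R), Xset p (teich p r)) /\
  (forall (R S : comPzRingType) (f : {rmorphism R -> S}) s,
      Xset p s -> Xset p (Xmap f s)) /\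
  (forall (R S : comPzRingType) (f : {rmorphism R -> S}) s,
      Xmap f (Vop p s) = Vop p (Xmap f s)) /\
  (forall (R S : comPzRingType) (f : {rmorphism R -> S}) (r : R),
      Xmap f (teich p r) = teich p (f r)) /\
  (forall R : comPzRingType, teich p (0 : R) = zero_seq R) /\
  (p != 2%N -> forall (R : comPzRingType) (x : R),
      teich p (- x) = sub_seq (zero_seq R) (teich p x)) /\
  (forall (R : comPzRingType) (x y : R),
      let g := fun z : R => sub_seq (Vop p (teich p (z ^+ p))) (scale_seq p (teich p z)) in
      g (x + y) = add_seq (g x) (g y)) /\
  (forall R : comPzRingType, X_complete p R) /\
  (forall A : comPzRingType, p_torsion_free p A ->
      forall s, Xset p s -> scale_seq p s = zero_seq A -> s = zero_seq A).

From mathcomp Require Import all_boot all_order all_algebra.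
From Stdlib Require Import FunctionalExtensionality IndefiniteDescription.
Set Implicit Arguments. Unset Strict Implicit. Unset Printing Implicit Defensive.
Import GRing.Theory.
Local Open Scope ring_scope.

(* Axioms (1), (2) and (4) are coordinatewise identities in R^{N_0}.  V and
   the maps induced by ring homomorphisms are additive and causal (coordinate
   i of the image only depends on coordinates <= i), hence continuous, so they
   map the closed subgroup generated by the V^n<r> into the corresponding one.
   For completeness, V^n X(R) consists of sequences vanishing below n, so a
   sequence that is Cauchy for the V-filtration stabilises coordinatewise; its
   limit, and the limits of the telescoping sums sum_k V^k t_(n+k) that
   witness the tails, lie in X(R) because X(R) is closed. *)

Definition causal (R S : Type) (phi : (nat -> R) -> nat -> S) :=
  forall s s' N, (forall i, (i < N)%N -> s i = s' i) ->
  forall i, (i < N)%N -> phi s i = phi s' i.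

Lemma causal_iter (R : Type) (phi : (nat -> R) -> nat -> R) n :
  causal phi -> causal (iter n phi).
Proof.
move=> phiC; elim: n => [|n IH] s s' N eq_s i ltiN //=.
  exact: eq_s.
by apply: (phiC _ _ N _ i ltiN) => j ltjN; apply: (IH _ _ N).
Qed.

Lemma stable_coord (T : Type) (z : nat -> nat -> T) :
  (forall M i, (i < M)%N -> z M.+1 i = z M i) ->
  forall m i, (i < m)%N -> z m i = z i.+1 i.
Proof.
move=> step; elim=> // m IH i; rewrite ltnS leq_eqVlt => /predU1P[-> // | ltim].
by rewrite step // IH.
Qed.

Section Verschiebung.
Variables (p : nat) (R : comPzRingType).
Local Notation V := (@Vop p R).

Lemma Vop_causal : causal V.
Proof.
move=> s s' N eq_s [|i] //= ltiN.
by rewrite /Vop eq_s // (ltn_trans _ ltiN).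
Qed.

Lemma Vop_zero : V (zero_seq R) = zero_seq R.
Proof. by apply: functional_extensionality => -[|i]; rewrite /Vop /zero_seq ?mulr0. Qed.

Lemma Vop_sub s t : V (sub_seq s t) = sub_seq (V s) (V t).
Proof.
by apply: functional_extensionality => -[|i]; rewrite /Vop /sub_seq ?subr0 ?mulrBr.
Qed.

Lemma Vop_add s t : V (add_seq s t) = add_seq (V s) (V t).
Proof.
by apply: functional_extensionality => -[|i]; rewrite /Vop /add_seq ?addr0 ?mulrDr.
Qed.

Lemma iterV_zero n : iter n V (zero_seq R) = zero_seq R.
Proof. by elim: n => //= n ->; rewrite Vop_zero. Qed.

Lemma iterV_add n s t : iter n V (add_seq s t) = add_seq (iter n V s) (iter n V t).
Proof. by elim: n => //= n ->; rewrite Vop_add. Qed.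

Lemma iterV_lt n s i : (i < n)%N -> iter n V s i = 0.
Proof.
elim: n i => // n IH [|i] /=; first by rewrite /Vop.
by rewrite ltnS /Vop => /IH ->; rewrite mulr0.
Qed.

Lemma Vteich_sub_scale z :
  sub_seq (V (teich p (z ^+ p))) (scale_seq p (teich p z)) =
  fun n => if n is 0 then - (z *+ p) else 0.
Proof.
apply: functional_extensionality => -[|n]; rewrite /sub_seq /Vop /scale_seq /teich.
  by rewrite expn0 expr1 sub0r.
by rewrite -exprM -expnS mulr_natl subrr.
Qed.

Lemma teich0 : (0 < p)%N -> teich p (0 : R) = zero_seq R.
Proof.
move=> p_gt0; apply: functional_extensionality => n.
by rewrite /teich expr0n expn_eq0 eqn0Ngt p_gt0.
Qed.

Lemma teichN x : odd p -> teich p (- x) = sub_seq (zero_seq R) (teich p x).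
Proof.
move=> p_odd; apply: functional_extensionality => n.
by rewrite /teich /sub_seq /zero_seq sub0r exprNn -signr_odd oddX p_odd orbT mulN1r.
Qed.

Lemma scale_seq_eq0 s :
  p_torsion_free p R -> scale_seq p s = zero_seq R -> s = zero_seq R.
Proof.
move=> torsion_free ps0; apply: functional_extensionality => n.
exact/torsion_free/(congr1 (@^~ n) ps0).
Qed.

End Verschiebung.

Section ClosedSubgroup.
Variables (p : nat) (R : comPzRingType).

Lemma Xset_zero : Xset p (zero_seq R).
Proof. by move=> C [C0 _]. Qed.

Lemma Xset_sub (s t : nat -> R) : Xset p s -> Xset p t -> Xset p (sub_seq s t).
Proof. by move=> Xs Xt C CG Cc Cgen; apply: CG.2; [apply: Xs | apply: Xt]. Qed.

Lemma Xset_add (s t : nat -> R) : Xset p s -> Xset p t -> Xset p (add_seq s t).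
Proof.
move=> Xs Xt.
have -> : add_seq s t = sub_seq s (sub_seq (zero_seq R) t).
  by apply: functional_extensionality => i; rewrite /add_seq /sub_seq /zero_seq sub0r opprK.
by do 2?apply: Xset_sub => //; apply: Xset_zero.
Qed.

Lemma Xset_closed : prod_closed (@Xset p R).
Proof.
move=> s approx C CG Cc Cgen; apply: (Cc) => N.
by have [c [Xc eq_c]] := approx N; exists c; split; first exact: Xc.
Qed.

Lemma Xset_gen (g : nat -> R) : Xgens p g -> Xset p g.
Proof. by move=> gen C _ _; apply. Qed.

Lemma Xset_diag (z : nat -> nat -> R) :
  (forall m, Xset p (z m)) -> (forall M i, (i < M)%N -> z M.+1 i = z M i) ->
  Xset p (fun i => z i.+1 i).
Proof.
move=> Xz step; apply: Xset_closed => N; exists (z N); split => // i ltiN.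
exact: stable_coord.
Qed.

End ClosedSubgroup.

Section Image.
Variables (p : nat) (R S : comPzRingType) (phi : (nat -> R) -> nat -> S).
Hypotheses (phi0 : phi (zero_seq R) = zero_seq S)
           (phiB : forall s t, phi (sub_seq s t) = sub_seq (phi s) (phi t))
           (phiC : causal phi)
           (phi_gen : forall g, Xgens p g -> Xset p (phi g)).

Lemma Xset_image s : Xset p s -> Xset p (phi s).
Proof.
move=> Xs; apply: (Xs (fun t => Xset p (phi t))) => //.
- split; first by rewrite phi0; apply: Xset_zero.
  by move=> s1 t1 Xs1 Xt1; rewrite phiB; apply: Xset_sub.
- move=> t approx; apply: Xset_closed => N.
  have [c [Xc eq_c]] := approx N.
  by exists (phi c); split => //; apply: phiC.
Qed.

End Image.

Lemma Xset_V (p : nat) (R : comPzRingType) (s : nat -> R) :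
  Xset p s -> Xset p (Vop p s).
Proof.
apply: Xset_image; [exact: Vop_zero | exact: Vop_sub | exact: Vop_causal |].
by move=> _ [n [r ->]]; apply: Xset_gen; exists n.+1, r.
Qed.

Lemma Xset_iterV (p : nat) (R : comPzRingType) n (s : nat -> R) :
  Xset p s -> Xset p (iter n (@Vop p R) s).
Proof. by move=> Xs; elim: n => //= n; apply: Xset_V. Qed.

Section Functoriality.
Variables (p : nat) (R S : comPzRingType) (f : {rmorphism R -> S}).

Lemma Xmap_V s : Xmap f (Vop p s) = Vop p (Xmap f s).
Proof.
apply: functional_extensionality => -[|k]; rewrite /Xmap /Vop ?rmorph0 //.
by rewrite rmorphM rmorph_nat.
Qed.

Lemma Xmap_iterV n s : Xmap f (iter n (@Vop p R) s) = iter n (@Vop p S) (Xmap f s).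
Proof. by elim: n => //= n IH; rewrite Xmap_V IH. Qed.

Lemma Xmap_teich r : Xmap f (teich p r) = teich p (f r).
Proof. by apply: functional_extensionality => n; rewrite /Xmap /teich rmorphXn. Qed.

Lemma Xset_map s : Xset p s -> Xset p (Xmap f s).
Proof.
apply: Xset_image.
- by apply: functional_extensionality => i; rewrite /Xmap /zero_seq rmorph0.
- by move=> s1 t1; apply: functional_extensionality => i; rewrite /Xmap /sub_seq rmorphB.
- by move=> s1 s2 N eq_s i ltiN; rewrite /Xmap eq_s.
- by move=> _ [n [r ->]]; rewrite Xmap_iterV Xmap_teich; apply: Xset_gen; exists n, (f r).
Qed.

End Functoriality.

Section Completeness.
Variables (p : nat) (R : comPzRingType).
Local Notation V := (@Vop p R).

Fixpoint Vseries (t : nat -> nat -> R) (M : nat) : nat -> R :=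
  if M is M'.+1 then add_seq (Vseries t M') (iter M' V (t M')) else zero_seq R.

Lemma Xset_Vseries t M : (forall k, Xset p (t k)) -> Xset p (Vseries t M).
Proof.
move=> Xt; elim: M => [|M IH] /=; first exact: Xset_zero.
by apply: Xset_add => //; apply: Xset_iterV.
Qed.

Lemma Vseries_step t M i : (i < M)%N -> Vseries t M.+1 i = Vseries t M i.
Proof. by move=> ltiM; rewrite /= /add_seq iterV_lt // addr0. Qed.

Lemma iterV_Vseries (x t : nat -> nat -> R) n M :
  (forall k, sub_seq (x k.+1) (x k) = iter k V (t k)) ->
  iter n V (Vseries (fun k => t (n + k)%N) M) = sub_seq (x (n + M)%N) (x n).
Proof.
move=> dx; elim: M => [|M IH] /=.
  by rewrite iterV_zero addn0; apply: functional_extensionality => i; rewrite /sub_seq subrr.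
rewrite iterV_add IH -iterD -dx addnS.
by apply: functional_extensionality => i; rewrite /add_seq /sub_seq addrC addrA subrK.
Qed.

Lemma Xset_separated s : (forall n, VnX p n s) -> s = zero_seq R.
Proof.
move=> sV; apply: functional_extensionality => i.
by have [t [_ ->]] := sV i.+1; apply: iterV_lt.
Qed.

Lemma Xset_cauchy_lim (x : nat -> nat -> R) :
  (forall n, Xset p (x n)) -> (forall n, VnX p n (sub_seq (x n.+1) (x n))) ->
  exists y, Xset p y /\ forall n, VnX p n (sub_seq y (x n)).
Proof.
move=> Xx dxV.
have [t dt] := functional_choice
  (fun k u => Xset p u /\ sub_seq (x k.+1) (x k) = iter k V u) dxV.
have x_step M i : (i < M)%N -> x M.+1 i = x M i.
  move=> ltiM; apply/eqP; rewrite -subr_eq0.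
  by have := congr1 (@^~ i) (dt M).2; rewrite /sub_seq iterV_lt // => ->.
exists (fun i => x i.+1 i); split; first exact: Xset_diag.
move=> n; pose P := Vseries (fun k => t (n + k)%N).
have XP M : Xset p (P M) by apply: Xset_Vseries => k; case: (dt (n + k)%N).
exists (fun i => P i.+1 i); split; first by apply: Xset_diag => // M i; apply: Vseries_step.
apply: functional_extensionality => i.
rewrite (@causal_iter _ _ n (@Vop_causal p R) _ (P i.+1) i.+1) //; last first.
  by move=> j ltji; rewrite /P (stable_coord (Vseries_step _) ltji).
rewrite (iterV_Vseries n _ (fun k => (dt k).2)) /sub_seq.
by rewrite (@stable_coord _ x x_step (n + i.+1)%N i) // leq_addl.
Qed.

Lemma Xset_complete : X_complete p R.
Proof. by split; [move=> s _; apply: Xset_separated | apply: Xset_cauchy_lim]. Qed.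

End Completeness.

Theorem lemma2p4 (p : nat) (hp : prime p) : X_is_preWitt p.
Proof.
split; first by move=> R; split; [exact: Xset_zero | exact: Xset_sub].
split; first by move=> R s; exact: Xset_V.
split; first by move=> R r; apply: Xset_gen; exists 0%N, r.
split; first by move=> R S f s; exact: Xset_map.
split; first by move=> R S f s; exact: Xmap_V.
split; first by move=> R S f r; exact: Xmap_teich.
split; first by move=> R; apply/teich0/prime_gt0.
split.
  move=> p_neq2 R x; apply: teichN.
  by case: (even_prime hp) p_neq2 => [-> //|].
split.
  move=> R x y g; rewrite /g !Vteich_sub_scale.
  by apply: functional_extensionality => -[|n]; rewrite /add_seq ?addr0 // mulrnDl opprD.
split; first by move=> R; exact: Xset_complete.
by move=> A torsion_free s _; exact: scale_seq_eq0.
Qed.
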